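(* Let $A,r,a,\mu>0$ and $0<\beta_0<1$, and consider the system $$\dot S = S(A-S)-\beta_0 IS,\qquad \dot I=\beta_0 IS-\mu I-\frac{rI}{a+I}.$$ Let $\Delta=\big(a\beta_0+A-\frac{\mu}{\beta_0}\big)^2-4r$, assume $\Delta>0$, and let $$S_3=\tfrac12\Big(a\beta_0+A+\tfrac{\mu}{\beta_0}-\sqrt\Delta\Big),\quad S_4=\tfrac12\Big(a\beta_0+A+\tfrac{\mu}{\beta_0}+\sqrt\Delta\Big),\quad E_j=\Big(S_j,\frac{A-S_j}{\beta_0}\Big)\ (j=3,4),$$ and assume $S_3<S_4<A$. Then the endemic equilibrium $E_3$ is a sink and the endemic equilibrium $E_4$ is a saddle.
   Context: $\mu$ denotes the total death rate of infectious individuals. $E_3,E_4$ are the endemic equilibria (zeros of the vector field with $I\neq 0$). A sink is an equilibrium whose Jacobian eigenvalues all have negative real part; a saddle is an equilibrium whose Jacobian has two real eigenvalues of opposite signs. *)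

From Stdlib Require Import Reals Lra.
From Coquelicot Require Import Coquelicot.
Open Scope R_scope.

Definition fS (A beta0 : R) (S I : R) : R := S * (A - S) - beta0 * I * S.
Definition fI (r a mu beta0 : R) (S I : R) : R :=
  beta0 * I * S - mu * I - r * I / (a + I).

Definition jac11 (f : R -> R -> R) (s i : R) : R := Derive (fun x => f x i) s.
Definition jac12 (f : R -> R -> R) (s i : R) : R := Derive (fun y => f s y) i.
Definition jac21 (g : R -> R -> R) (s i : R) : R := Derive (fun x => g x i) s.
Definition jac22 (g : R -> R -> R) (s i : R) : R := Derive (fun y => g s y) i.

Definition is_jac_eigenvalue (f g : R -> R -> R) (s i : R) (l : C) : Prop :=
  ((l - RtoC (jac11 f s i)) * (l - RtoC (jac22 g s i))
     - RtoC (jac12 f s i) * RtoC (jac21 g s i))%C = 0%C.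

Definition is_equilibrium (f g : R -> R -> R) (s i : R) : Prop :=
  f s i = 0 /\ g s i = 0.

Definition is_sink (f g : R -> R -> R) (s i : R) : Prop :=
  is_equilibrium f g s i /\
  forall l : C, is_jac_eigenvalue f g s i l -> Re l < 0.

Definition is_saddle (f g : R -> R -> R) (s i : R) : Prop :=
  is_equilibrium f g s i /\
  exists l1 l2 : R, is_jac_eigenvalue f g s i (RtoC l1) /\
                    is_jac_eigenvalue f g s i (RtoC l2) /\ l1 < 0 < l2.

(* At an endemic point (S, I) with I = (A - S)/beta0, write
   w = sat_gap S = beta0 (a + I) and z = mu_gap S = S - mu/beta0.  The
   I-equation holds iff w z = r, and the Jacobian has trace
   -S + beta0 z (A - S)/w and determinant beta0 S (A - S) (w - z)/w.  The two
   roots of w z = r swap the roles of w and z: at S3 we have z < w, giving a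
   positive determinant and (as beta0 < 1) a negative trace, while at S4 we have
   w < z and a negative determinant. *)
From Stdlib Require Import Reals Lra.
From Coquelicot Require Import Coquelicot.
Open Scope R_scope.

Lemma jac11_fS A b s i : jac11 (fS A b) s i = A - 2 * s - b * i.
Proof. unfold jac11, fS; apply is_derive_unique; auto_derive; [easy | ring]. Qed.

Lemma jac12_fS A b s i : jac12 (fS A b) s i = - b * s.
Proof. unfold jac12, fS; apply is_derive_unique; auto_derive; [easy | ring]. Qed.

Lemma jac21_fI r a mu b s i : jac21 (fI r a mu b) s i = b * i.
Proof. unfold jac21, fI; apply is_derive_unique; auto_derive; [easy | ring]. Qed.

Lemma jac22_fI r a mu b s i :
  a + i <> 0 -> jac22 (fI r a mu b) s i = b * s - mu - r * a / (a + i) ^ 2.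
Proof.
  intros Hai; unfold jac22, fI.
  apply is_derive_unique; auto_derive; [easy | field; easy].
Qed.

Lemma charpoly2_split j11 j12 j21 j22 x y :
  (((x, y) - RtoC j11) * ((x, y) - RtoC j22) - RtoC j12 * RtoC j21)%C = 0%C ->
  (x - j11) * (x - j22) - y * y - j12 * j21 = 0 /\ y * (2 * x - j11 - j22) = 0.
Proof.
  unfold RtoC, Cminus, Cplus, Cmult, Copp; simpl.
  intros H; injection H; intros; split; nra.
Qed.

Lemma charpoly2_RtoC j11 j12 j21 j22 x :
  (x - j11) * (x - j22) - j12 * j21 = 0 ->
  ((RtoC x - RtoC j11) * (RtoC x - RtoC j22) - RtoC j12 * RtoC j21)%C = 0%C.
Proof.
  intros H; unfold RtoC, Cminus, Cplus, Cmult, Copp; simpl; f_equal; nra.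
Qed.

Lemma charpoly2_root_Re_lt0 j11 j12 j21 j22 (l : C) :
  j11 + j22 < 0 -> 0 < j11 * j22 - j12 * j21 ->
  ((l - RtoC j11) * (l - RtoC j22) - RtoC j12 * RtoC j21)%C = 0%C ->
  Re l < 0.
Proof.
  destruct l as [x y]; simpl; intros Htr Hdet Hl.
  destruct (charpoly2_split _ _ _ _ _ _ Hl) as [Hre Him].
  destruct (Req_dec y 0) as [-> | Hy].
  - nra.
  - destruct (Rmult_integral _ _ Him); [contradiction | lra].
Qed.

Lemma charpoly2_opposite_roots j11 j12 j21 j22 :
  j11 * j22 - j12 * j21 < 0 ->
  exists l1 l2 : R, (l1 - j11) * (l1 - j22) - j12 * j21 = 0 /\
                    (l2 - j11) * (l2 - j22) - j12 * j21 = 0 /\ l1 < 0 < l2.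
Proof.
  intros Hdet.
  set (t := j11 + j22); set (d := j11 * j22 - j12 * j21) in Hdet.
  assert (Hdisc : 0 <= t * t - 4 * d) by nra.
  pose proof (sqrt_sqrt _ Hdisc) as Hq; pose proof (sqrt_pos (t * t - 4 * d)).
  set (q := sqrt (t * t - 4 * d)) in *.
  assert (t < q /\ - t < q) by (split; nra).
  exists ((t - q) / 2), ((t + q) / 2); repeat split; try lra;
    unfold t, d in *; nra.
Qed.

Lemma sink_of_trace_det f g s i :
  is_equilibrium f g s i ->
  jac11 f s i + jac22 g s i < 0 ->
  0 < jac11 f s i * jac22 g s i - jac12 f s i * jac21 g s i ->
  is_sink f g s i.
Proof.
  intros Heq Htr Hdet; split; [easy |].
  intros l; apply charpoly2_root_Re_lt0; assumption.
Qed.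

Lemma saddle_of_det f g s i :
  is_equilibrium f g s i ->
  jac11 f s i * jac22 g s i - jac12 f s i * jac21 g s i < 0 ->
  is_saddle f g s i.
Proof.
  intros Heq Hdet; split; [easy |].
  destruct (charpoly2_opposite_roots _ _ _ _ Hdet) as (l1 & l2 & H1 & H2 & Hl).
  exists l1, l2; unfold is_jac_eigenvalue; auto using charpoly2_RtoC.
Qed.

Section Endemic.

Variables A r a mu beta : R.
Hypotheses (Ha : 0 < a) (Hmu : 0 < mu) (Hbeta : 0 < beta) (Hbeta1 : beta < 1).

Let f := fS A beta.
Let g := fI r a mu beta.

Definition sat_gap S := a * beta + A - S.
Definition mu_gap S := S - mu / beta.

Section Point.

Variable S : R.
Hypotheses (HSA : S < A) (Hroot : sat_gap S * mu_gap S = r).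

Let I := (A - S) / beta.

Let sat_gap_pos : 0 < sat_gap S.
Proof. unfold sat_gap; nra. Qed.

Let a_plus_I : a + I = sat_gap S / beta.
Proof. unfold I, sat_gap; field; lra. Qed.

Lemma endemic_equilibrium : is_equilibrium f g S I.
Proof.
  split; unfold f, g, fS, fI.
  - unfold I; field; lra.
  - rewrite a_plus_I, <- Hroot; unfold mu_gap; field; split; lra.
Qed.

Lemma endemic_jacobian :
  jac11 f S I = - S /\ jac12 f S I = - beta * S /\ jac21 g S I = A - S /\
  jac22 g S I = beta * mu_gap S * (A - S) / sat_gap S.
Proof.
  pose proof sat_gap_pos as Hw.
  unfold f, g; rewrite jac11_fS, jac12_fS, jac21_fI, jac22_fI.
  - split; [| split; [| split]]; [unfold I; field; lra | ring | unfold I; field; lra |].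
    rewrite a_plus_I, <- Hroot; unfold mu_gap, sat_gap in *; field; lra.
  - rewrite a_plus_I; apply Rgt_not_eq, Rdiv_lt_0_compat; lra.
Qed.

Lemma endemic_sink : 0 < mu_gap S < sat_gap S -> is_sink f g S I.
Proof.
  intros [Hz Hzw]; pose proof sat_gap_pos as Hw.
  assert (Hz_lt : mu_gap S < S).
  { assert (0 < mu / beta) by (apply Rdiv_lt_0_compat; lra).
    unfold mu_gap; lra. }
  assert (HAS : A - S < sat_gap S) by (unfold sat_gap; nra).
  set (k := mu_gap S * (A - S) / sat_gap S).
  (* k < mu_gap S < S and beta < 1 bound the trace; k < A - S gives the determinant *)
  assert (Hk : k < mu_gap S /\ k < A - S).
  { unfold k; split; apply Rmult_lt_reg_r with (sat_gap S); try lra;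
      unfold Rdiv; rewrite Rmult_assoc, Rinv_l by lra; nra. }
  assert (HSpos : 0 < S) by lra.
  destruct endemic_jacobian as (J11 & J12 & J21 & J22).
  apply sink_of_trace_det; [exact endemic_equilibrium | |];
    rewrite ?J11, ?J12, ?J21, ?J22;
    replace (beta * mu_gap S * (A - S) / sat_gap S) with (beta * k)
      by (unfold k, Rdiv; ring).
  - nra.
  - assert (0 < beta * S) by nra; nra.
Qed.

Lemma endemic_saddle : 0 < sat_gap S < mu_gap S -> is_saddle f g S I.
Proof.
  intros [Hw Hwz].
  assert (HSpos : 0 < S).
  { assert (0 < mu / beta) by (apply Rdiv_lt_0_compat; lra).
    unfold mu_gap in Hwz; lra. }
  set (k := mu_gap S * (A - S) / sat_gap S).
  assert (Hk : A - S < k).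
  { unfold k; apply Rmult_lt_reg_r with (sat_gap S); [lra |].
    unfold Rdiv; rewrite Rmult_assoc, Rinv_l by lra; nra. }
  apply saddle_of_det; [exact endemic_equilibrium |].
  destruct endemic_jacobian as (-> & -> & -> & ->).
  replace (beta * mu_gap S * (A - S) / sat_gap S) with (beta * k)
    by (unfold k, Rdiv; ring).
  assert (0 < beta * S) by nra; nra.
Qed.

End Point.

End Endemic.

Lemma gap_product_at_root P Q r e S :
  e * e = (P - Q) ^ 2 - 4 * r -> 2 * S = P + Q + e -> (P - S) * (S - Q) = r.
Proof.
  intros He HS.
  replace S with ((P + Q + e) / 2) by lra.
  replace r with (((P - Q) ^ 2 - e * e) / 4) by lra.
  field.
Qed.

Theorem lemma5p4 (A r a mu beta0 : R) :
  0 < A -> 0 < r -> 0 < a -> 0 < mu -> 0 < beta0 -> beta0 < 1 ->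
  let Delta := (a * beta0 + A - mu / beta0) ^ 2 - 4 * r in
  0 < Delta ->
  let S3 := (a * beta0 + A + mu / beta0 - sqrt Delta) / 2 in
  let S4 := (a * beta0 + A + mu / beta0 + sqrt Delta) / 2 in
  S3 < S4 -> S4 < A ->
  is_sink (fS A beta0) (fI r a mu beta0) S3 ((A - S3) / beta0) /\
  is_saddle (fS A beta0) (fI r a mu beta0) S4 ((A - S4) / beta0).
Proof.
  intros _ _ Ha Hmu Hb Hb1 Delta HD S3 S4 _ H4A.
  pose proof (sqrt_sqrt Delta (Rlt_le _ _ HD)) as Hsq.
  pose proof (sqrt_lt_R0 Delta HD) as Hsqrt_pos.
  assert (Hab : 0 < a * beta0) by nra.
  assert (HS3 : 2 * S3 = a * beta0 + A + mu / beta0 + - sqrt Delta)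
    by (unfold S3; lra).
  assert (HS4 : 2 * S4 = a * beta0 + A + mu / beta0 + sqrt Delta)
    by (unfold S4; lra).
  split.
  - apply endemic_sink; try lra.
    + apply gap_product_at_root with (- sqrt Delta); [| exact HS3].
      now rewrite Rmult_opp_opp, Hsq.
    + unfold sat_gap, mu_gap; lra.
  - apply endemic_saddle; try lra.
    + apply gap_product_at_root with (sqrt Delta); [now rewrite Hsq | exact HS4].
    + unfold sat_gap, mu_gap; lra.
Qed.
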